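(* Let $D[X]$ be a directed sub-block and let $W\subsetneq X$ with $|W|\ge2$ contain a node $i$ that is reachable from all other nodes both in $D[W]$ and in $D[X]$. Then there is a node $k\in X\setminus W$ such that $W\cup\{k\}$ can be generated from $W$, and $i$ is reachable from all other nodes in $D[W\cup\{k\}]$.
   Context: $D=(V,A)$ is a directed graph. $\mathrm{IN}(X)$ is the set of nodes from which some member of $X$ is reachable by a directed path. For disjoint nonempty $X,Y,Z$, $f_E(X,Y,Z)=1$ iff $\mathrm{IN}(X)\cap\mathrm{IN}(Y)=\emptyset$ computed in $D-Z$; node $j$ is dynamically partitioning relative to $k$ and $Y$ iff $f_E(\{k\},Y,\{j\})=1$. A set $W_n$ of size $n$ can be generated from $W_m$ of size $m$, $2\le m<n$, iff there are sets $W_m\subset\dots\subset W_n$ with $W_{l+1}=W_l\cup\{k\}$, $k\in V\setminus W_l$, such that there is an arc from $k$ to some $j\in W_l$ that is not dynamically partitioning relative to $k$ and $W_l\setminus\{j\}$. $D[W]$ is the subgraph induced on $W$; reachability in $D[W]$ is via directed paths inside $D[W]$. A graph is biconnected if it has at least three vertices, is connected and remains connected after deleting any one vertex. $D[X]$ is a directed sub-block if some node of $X$ is reachable within $D[X]$ from all other nodes and the underlying undirected graph of $D[X]$ is biconnected. *)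

(* A directed graph D = (V, A) is a finite type V with an
   arc relation a : rel V (a u v  <->  arc u -> v). *)
From mathcomp Require Import all_boot.
Set Implicit Arguments. Unset Strict Implicit. Unset Printing Implicit Defensive.

Section Defs.
Variables (V : finType) (a : rel V).

Definition restr (S : {set V}) : rel V :=
  [rel u v | [&& u \in S, v \in S & a u v]].

Definition reach_in (S : {set V}) (u v : V) : bool :=
  [&& u \in S, v \in S & connect (restr S) u v].

Definition IN_minus (X Z : {set V}) : {set V} :=
  [set u | (u \notin Z) && [exists x in X, reach_in (~: Z) u x]].

Definition fE (X Y Z : {set V}) : bool :=
  IN_minus X Z :&: IN_minus Y Z == set0.

Definition dyn_part (j k : V) (Y : {set V}) : bool := fE [set k] Y [set j].

Definition gen_step (W W' : {set V}) : Prop :=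
  exists k, [/\ k \notin W, W' = k |: W &
    exists j, [/\ j \in W, a k j & ~~ dyn_part j k (W :\ j)]].

Inductive gen_chain : {set V} -> {set V} -> Prop :=
| gen_one W W' : gen_step W W' -> gen_chain W W'
| gen_more W W' W'' : gen_step W W' -> gen_chain W' W'' -> gen_chain W W''.

Definition can_generate (W W' : {set V}) : Prop :=
  2 <= #|W| /\ #|W| < #|W'| /\ gen_chain W W'.

Definition root_in (S : {set V}) (i : V) : Prop :=
  i \in S /\ forall u, u \in S -> reach_in S u i.

Definition uedge : rel V := [rel u v | (u != v) && (a u v || a v u)].

Definition uconnected_in (S : {set V}) : bool :=
  [forall u in S, forall v in S, connect [rel x y | [&& x \in S, y \in S & uedge x y]] u v].

Definition ubiconnected_in (S : {set V}) : bool :=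
  [&& 3 <= #|S|, uconnected_in S & [forall v in S, uconnected_in (S :\ v)]].

Definition sub_block (X : {set V}) : Prop :=
  (exists i, root_in X i) /\ ubiconnected_in X.

End Defs.

(* Take any s in X \ W and follow a path of D[X] from s to the root i: it enters W through an
   arc k0 -> j.  An arc k -> j into W keeps i a root of D[W + k], and it is a generation step as
   soon as some node u reaches both k and W \ {j} in D - j.  If k0 itself does not reach W \ {j}
   in D - j, use that D[X] - j is still weakly connected: the set of nodes reaching W \ {j} in
   D - j is closed under predecessors and misses k0, so some arc q -> p leads out of it.  The path
   from p to i enters W through some arc k -> y after avoiding W, and y = j since p does not
   reach W \ {j}; then u = q works for k. *)
From mathcomp Require Import all_boot.

Set Implicit Arguments.
Unset Strict Implicit.
Unset Printing Implicit Defensive.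

Lemma connect_first_entry (T : finType) (e : rel T) (P : pred T) x y :
  connect e x y -> ~~ P x -> P y ->
  exists p q, [/\ connect [rel u v | [&& ~~ P u, ~~ P v & e u v]] x p,
                  ~~ P p, e p q & P q].
Proof.
move=> /connectP [s]; elim: s x => [|z s IH] x /=.
  by move=> _ -> Px Py; move: Px; rewrite Py.
move=> /andP [exz pzs] ly Px Py.
case Pz: (P z); first by exists x, z; split.
have [p [q [c Pp epq Pq]]] := IH z pzs ly (negbT Pz) Py.
exists p, q; split => //; apply: connect_trans c.
by apply: connect1; rewrite /= Px Pz exz.
Qed.

Section Reachability.
Variables (V : finType) (a : rel V).
Implicit Types (P S X W Y Z : {set V}) (i j k u v w : V).

Lemma reach_in_refl S u : u \in S -> reach_in a S u u.
Proof. by move=> uS; rewrite /reach_in uS connect0. Qed.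

Lemma reach_in_arc S u v : u \in S -> v \in S -> a u v -> reach_in a S u v.
Proof. by move=> uS vS auv; rewrite /reach_in uS vS connect1 // /restr /= uS vS. Qed.

Lemma reach_in_trans S v u w :
  reach_in a S u v -> reach_in a S v w -> reach_in a S u w.
Proof.
move=> /and3P [uS _ cuv] /and3P [_ wS cvw].
by rewrite /reach_in uS wS (connect_trans cuv cvw).
Qed.

Lemma reach_in_sub S S' u v :
  S \subset S' -> reach_in a S u v -> reach_in a S' u v.
Proof.
move=> /subsetP sub /and3P [uS vS c].
rewrite /reach_in (sub u uS) (sub v vS); apply: connect_sub c => x y /and3P [xS yS axy].
by apply: connect1; rewrite /restr /= (sub x xS) (sub y yS).
Qed.

Lemma in_IN_minus Y Z u :
  (u \in IN_minus a Y Z) = [exists y in Y, reach_in a (~: Z) u y].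
Proof.
rewrite inE; apply: andb_idl => /exists_inP [y _ /and3P [uZ _ _]].
by rewrite inE in uZ.
Qed.

Lemma IN_minus_self Y Z y : y \in Y -> y \notin Z -> y \in IN_minus a Y Z.
Proof.
move=> yY yZ; rewrite in_IN_minus; apply/exists_inP; exists y => //.
by apply: reach_in_refl; rewrite inE.
Qed.

Lemma IN_minus_reach Y Z u v :
  reach_in a (~: Z) u v -> v \in IN_minus a Y Z -> u \in IN_minus a Y Z.
Proof.
rewrite !in_IN_minus => ruv /exists_inP [y yY rvy].
by apply/exists_inP; exists y => //; apply: reach_in_trans ruv rvy.
Qed.

Lemma common_ancestor_not_dyn_part j k Y u :
  u \in IN_minus a [set k] [set j] -> u \in IN_minus a Y [set j] ->
  ~~ dyn_part a j k Y.
Proof. by move=> uk uY; apply/set0Pn; exists u; rewrite inE uk. Qed.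

Lemma uconnected_out_arc S P x y :
  uconnected_in a S -> x \in S -> y \in S -> x \notin P -> y \in P ->
  (forall u v, u \in S -> v \in S -> a u v -> v \in P -> u \in P) ->
  exists p q, [/\ p \in S, q \in S, p \notin P, q \in P & a q p].
Proof.
move=> /forall_inP /(_ x) conn xS yS Px Py closedP.
move: (conn xS) => /forall_inP /(_ y yS) cxy.
have [p [q [_ Pp /and3P [pS qS /andP [_ /orP [apq | aqp]]] Pq]]] :=
  connect_first_entry (P := fun v => v \in P) cxy Px Py.
  by rewrite (closedP p q) in Pp.
by exists p, q.
Qed.

Lemma can_generate_setU1 W k j :
  2 <= #|W| -> k \notin W -> j \in W -> a k j -> ~~ dyn_part a j k (W :\ j) ->
  can_generate a W (k |: W).
Proof.
move=> W2 kW jW akj ndp; split => //; split; first by rewrite cardsU1 kW.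
by apply: gen_one; exists k; split => //; exists j.
Qed.

Lemma root_in_setU1 W i k j :
  root_in a W i -> j \in W -> a k j -> root_in a (k |: W) i.
Proof.
move=> [iW rootW] jW akj; have WkW := subsetUr [set k] W.
split; first by rewrite in_setU1 iW orbT.
move=> v; rewrite in_setU1 => /predU1P [-> | vW]; last first.
  exact: reach_in_sub WkW (rootW v vW).
apply: reach_in_trans (reach_in_sub WkW (rootW j jW)).
by apply: reach_in_arc; rewrite ?setU11 ?in_setU1 ?jW ?orbT.
Qed.

Section EntryArcs.
Variables (X W : {set V}) (i : V).
Hypotheses (rootX : root_in a X i) (iW : i \in W).

Lemma entry_arc s : s \in X :\: W ->
  exists k j, [/\ k \in X :\: W, j \in W, a k j & reach_in a (X :\: W) s k].
Proof.
move=> sXW; have /setDP [sX sW] := sXW.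
have /and3P [_ _ csi] := rootX.2 s sX.
have [k [j [csk kW /and3P [kX jX akj] jW]]] := connect_first_entry csi sW iW.
have kXW : k \in X :\: W by rewrite inE kW.
exists k, j; split => //; rewrite /reach_in sXW kXW /=.
apply: connect_sub csk => x y /and3P [xW yW /and3P [xX yX axy]].
by apply: connect1; rewrite /restr /= !inE xW yW xX yX.
Qed.

Lemma not_dyn_part_entry_arc_of_escape j p q :
    let R := IN_minus a (W :\ j) [set j] in
  j \in W -> p \in X :\ j -> q != j -> a q p -> q \in R -> p \notin R ->
  exists k, [/\ k \in X :\: W, a k j & ~~ dyn_part a j k (W :\ j)].
Proof.
move=> R jW /setD1P [pj pX] qj aqp Rq Rp.
have pW : p \notin W by apply: contra Rp => pW; rewrite IN_minus_self ?inE ?pj.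
have pXW : p \in X :\: W by rewrite inE pW.
have [k [y [kXW yW aky rpk]]] := entry_arc pXW.
have XWj : X :\: W \subset ~: [set j].
  by apply/subsetP => u /setDP [_ uW]; rewrite !inE; apply: contraNneq uW => ->.
have {}rpk := reach_in_sub XWj rpk.
have kj : k != j by case/setDP: kXW => _ kW; apply: contraNneq kW => ->.
have yj : y = j.
  apply/eqP; apply: contraNT Rp => yj.
  have Ry : y \in R by rewrite IN_minus_self // !inE yj.
  have rky : reach_in a (~: [set j]) k y by apply: reach_in_arc; rewrite // !inE ?kj.
  exact: IN_minus_reach rpk (IN_minus_reach rky Ry).
subst y; exists k; split => //.
have rqp : reach_in a (~: [set j]) q p by apply: reach_in_arc; rewrite // !inE ?pj.
apply: (common_ancestor_not_dyn_part _ Rq).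
by apply: IN_minus_reach rqp (IN_minus_reach rpk _); rewrite IN_minus_self ?set11 ?inE.
Qed.

Hypotheses (bicX : ubiconnected_in a X) (WX : W \subset X) (W2 : 2 <= #|W|).

Lemma not_dyn_part_entry_arc s : s \in X :\: W ->
  exists k j, [/\ k \in X :\: W, j \in W, a k j & ~~ dyn_part a j k (W :\ j)].
Proof.
move=> sXW; have [k0 [j [k0XW jW ak0j _]]] := entry_arc sXW.
have /setDP [k0X k0W] := k0XW.
have k0j : k0 != j by apply: contraNneq k0W => ->.
set R := IN_minus a (W :\ j) [set j].
have [Rk0 | Rk0] := boolP (k0 \in R).
  exists k0, j; split => //; apply: common_ancestor_not_dyn_part Rk0.
  by rewrite IN_minus_self ?set11 ?inE.
have [w wWj] : exists w, w \in W :\ j.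
  by apply/set0Pn; rewrite -card_gt0; move: W2; rewrite (cardsD1 j W) jW add1n.
have /setD1P [wj wW] := wWj.
have Rw : w \in R by rewrite IN_minus_self // inE.
have /and3P [_ _ /forall_inP /(_ j (subsetP WX j jW)) connXj] := bicX.
have [p [q [pXj /setD1P [qj _] Rp Rq aqp]]] :
    exists p q, [/\ p \in X :\ j, q \in X :\ j, p \notin R, q \in R & a q p].
  apply: (uconnected_out_arc connXj _ _ Rk0 Rw).
  - by rewrite in_setD1 k0j.
  - by rewrite in_setD1 wj (subsetP WX).
  - move=> u v /setD1P [uj _] /setD1P [vj _] auv; apply: IN_minus_reach.
    by apply: reach_in_arc; rewrite // !inE.
have [k [kXW akj ndp]] := not_dyn_part_entry_arc_of_escape jW pXj qj aqp Rq Rp.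
by exists k, j.
Qed.

End EntryArcs.
End Reachability.

Theorem mainTheorem10 (V : finType) (a : rel V) (X W : {set V}) (i : V) :
  sub_block a X ->
  W \proper X ->
  2 <= #|W| ->
  root_in a W i ->
  root_in a X i ->
  exists k, [/\ k \in X :\: W,
                can_generate a W (k |: W) &
                root_in a (k |: W) i].
Proof.
move=> [_ bicX] /properP [WX [s sX sW]] W2 rootW rootX.
have sXW : s \in X :\: W by rewrite inE sW.
have [k [j [kXW jW akj ndp]]] :=
  not_dyn_part_entry_arc rootX rootW.1 bicX WX W2 sXW.
have /setDP [_ kW] := kXW.
exists k; split => //; first exact: can_generate_setU1 W2 kW jW akj ndp.
exact: root_in_setU1 rootW jW akj.
Qed.
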